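(* Let $X$ be a compact metric space, let $f_1,f_2:X\to X$ be continuous, and let $F=\{f_1,f_2\}$. Suppose there is a point $c\in X$ with $f_1(x)=c$ for all $x\in X$ and $f_2(c)=c$. If $F$ has the (Hausdorff metric) shadowing property, then $f_2$ has the shadowing property. Likewise, if $F$ has the (Hausdorff metric) average shadowing property, then $f_2$ has the average shadowing property.
   Context: Throughout, $(X,d)$ is a compact metric space, $\mathbb{N}=\{0,1,2,\dots\}$ and $\mathbb{Z}^+=\{1,2,\dots\}$. $\mathbb{K}(X)$ denotes the set of nonempty compact subsets of $X$, equipped with the Hausdorff metric $d_H(A,B)=\max\{\sup_{a\in A}\inf_{b\in B}d(a,b),\sup_{b\in B}\inf_{a\in A}d(a,b)\}$. A point $x\in X$ is identified with $\{x\}\in\mathbb{K}(X)$. Multiple mappings: for continuous $f_1,f_2:X\to X$, $F=\{f_1,f_2\}$ maps $x\in X$ to $F(x)=\{f_1(x),f_2(x)\}\in\mathbb{K}(X)$. For $n\ge1$, $F^n(x)=\{f_{i_1}f_{i_2}\cdots f_{i_n}(x): i_1,\dots,i_n\in\{1,2\}\}$, and $F^0(x)=\{x\}$. For $A\in\mathbb{K}(X)$, $F^n(A)=\bigcup_{a\in A}F^n(a)\in\mathbb{K}(X)$. Shadowing of $F$: a sequence $\{A_n\}_{n\ge0}\subset\mathbb{K}(X)$ with $A_0$ a singleton is a $\delta$-pseudo orbit of $F$ if $d_H(F(A_n),A_{n+1})\le\delta$ for all $n\in\mathbb{N}$. $F$ has the shadowing property if for every $\epsilon>0$ there is $\delta>0$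 such that for every $\delta$-pseudo orbit $\{A_n\}$ of $F$ there is $y\in X$ with $d_H(F^n(y),A_n)<\epsilon$ for all $n\in\mathbb{N}$. Average shadowing of $F$: a sequence $\{A_n\}_{n\ge0}\subset\mathbb{K}(X)$ with $A_0$ a singleton is a $\delta$-average-pseudo-orbit of $F$ if there is $N(\delta)>0$ such that for all $n\ge N(\delta)$ and all $k\in\mathbb{Z}^+$, $\frac1n\sum_{i=0}^{n-1}d_H(F(A_{i+k}),A_{i+k+1})<\delta$. $F$ has the average shadowing property if for every $\epsilon>0$ there is $\delta>0$ such that for every $\delta$-average-pseudo-orbit $\{A_n\}$ of $F$ there is $y\in X$ with $\limsup_{n\to\infty}\frac1n\sum_{i=0}^{n-1}d_H(F^i(y),A_i)<\epsilon$. For a single continuous map $f:X\to X$: a $\delta$-pseudo orbit is $\{x_n\}_{n\ge0}\subset X$ with $d(f(x_n),x_{n+1})\le\delta$ for all $n$; $f$ has the shadowing property if for every $\epsilon>0$ there is $\delta>0$ such that every $\delta$-pseudo orbit $\{x_n\}$ admits $y\in X$ with $d(f^n(y),x_n)<\epsilon$ for all $n\in\mathbb{N}$. A $\delta$-average-pseudo-orbit of $f$ is $\{x_n\}_{n\ge0}$ such that there is $N(\delta)>0$ with $\frac1n\sum_{i=0}^{n-1}d(f(x_{i+k}),x_{i+k+1})<\delta$ for all $n\ge N(\delta)$, $k\in\mathbb{Z}^+$; $f$ has the average shadowing property if for every $\epsilon>0$ there is $\delta>0$ such that every $\delta$-average-pseudo-orbit $\{x_n\}$ admits $y\in X$ with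 $\limsup_{n\to\infty}\frac1n\sum_{i=0}^{n-1}d(f^i(y),x_i)<\epsilon$. *)

From HB Require Import structures.
From mathcomp Require Import all_boot all_order all_algebra.
From mathcomp Require Import all_classical all_reals all_analysis.
Set Implicit Arguments.
Unset Strict Implicit.
Unset Printing Implicit Defensive.
Import Order.TTheory GRing.Theory Num.Theory.
Local Open Scope classical_set_scope.
Local Open Scope ring_scope.

Section Defs.
Context {R : realType} {X : metricType R}.

Local Notation d := (@mdist R X).

Definition hdist (A B : set X) : R :=
  Num.max (sup [set inf [set d a b | b in B] | a in A])
          (sup [set inf [set d a b | a in A] | b in B]).

Definition Fpt (f1 f2 : X -> X) (x : X) : set X := [set f1 x; f2 x].

Definition Fset (f1 f2 : X -> X) (A : set X) : set X :=
  \bigcup_(a in A) Fpt f1 f2 a.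

(* F^n(x) = { f_{i1} f_{i2} ... f_{in} (x) : i1,...,in in {1,2} };
   a word [:: i1; ...; in] (true = index 1, false = index 2) acts by foldr,
   so f_{in} is applied first. F^0(x) = {x}. *)
Definition Fpow (f1 f2 : X -> X) (n : nat) (x : X) : set X :=
  [set foldr (fun (i : bool) z => if i then f1 z else f2 z) x w
     | w in [set w : seq bool | size w = n]].

Definition admissible_seq (A : nat -> set X) : Prop :=
  (forall n, compact (A n) /\ A n !=set0) /\ (exists x, A 0%N = [set x]).

Definition F_shadowing (f1 f2 : X -> X) : Prop :=
  forall eps : R, 0 < eps -> exists2 delta : R, 0 < delta &
    forall A : nat -> set X, admissible_seq A ->
      (forall n, hdist (Fset f1 f2 (A n)) (A n.+1) <= delta) ->
      exists y : X, forall n, hdist (Fpow f1 f2 n y) (A n) < eps.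

Definition F_avg_pseudo_orbit (f1 f2 : X -> X) (delta : R) (A : nat -> set X) : Prop :=
  admissible_seq A /\
  exists N : nat, (0 < N)%N /\
    forall n k : nat, (N <= n)%N -> (0 < k)%N ->
      n%:R^-1 * \sum_(i < n) hdist (Fset f1 f2 (A (i + k)%N)) (A (i + k).+1) < delta.

Definition F_avg_shadowing (f1 f2 : X -> X) : Prop :=
  forall eps : R, 0 < eps -> exists2 delta : R, 0 < delta &
    forall A : nat -> set X, F_avg_pseudo_orbit f1 f2 delta A ->
      exists y : X,
        (limn_esup (fun n : nat =>
           (n%:R^-1 * \sum_(i < n) hdist (Fpow f1 f2 i y) (A i))%:E)
         < eps%:E)%E.

Definition shadowing (f : X -> X) : Prop :=
  forall eps : R, 0 < eps -> exists2 delta : R, 0 < delta &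
    forall x : nat -> X, (forall n, d (f (x n)) (x n.+1) <= delta) ->
      exists y : X, forall n, d (iter n f y) (x n) < eps.

Definition avg_pseudo_orbit (f : X -> X) (delta : R) (x : nat -> X) : Prop :=
  exists N : nat, (0 < N)%N /\
    forall n k : nat, (N <= n)%N -> (0 < k)%N ->
      n%:R^-1 * \sum_(i < n) d (f (x (i + k)%N)) (x (i + k).+1) < delta.

Definition avg_shadowing (f : X -> X) : Prop :=
  forall eps : R, 0 < eps -> exists2 delta : R, 0 < delta &
    forall x : nat -> X, avg_pseudo_orbit f delta x ->
      exists y : X,
        (limn_esup (fun n : nat =>
           (n%:R^-1 * \sum_(i < n) d (iter i f y) (x i))%:E)
         < eps%:E)%E.

End Defs.

From HB Require Import structures.
From mathcomp Require Import all_boot all_order all_algebra.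
From mathcomp Require Import all_classical all_reals all_analysis.
From mathcomp Require Import lra.
Import Order.TTheory GRing.Theory Num.Theory.
Local Open Scope classical_set_scope.
Local Open Scope ring_scope.
Set Implicit Arguments.
Unset Strict Implicit.

(** Since [f1] collapses everything onto the fixed point [c] of [f2], every
    word applied to [y] yields [f2^n y] or [c], so [{f2^n y} <= F^n(y) <=
    {f2^n y, c}].  An [f2]-pseudo orbit [x] lifts to the [F]-pseudo orbit
    [A_n = {c, x_n}] with no larger one-step errors, and if [F^n(y)] is
    Hausdorff-close to [A_n] then [d(f2^n y, x_n)] is at most twice that
    distance, the worst case being a triangle inequality through [c]. *)

Section Hausdorff.
Context {R : realType} {X : metricType R}.
Local Notation d := (@mdist R X).
Implicit Types (A B : set X) (r e : R).

Definition hexcess A B : R := sup [set inf [set d a b | b in B] | a in A].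

Lemma hdistE A B : hdist A B = Num.max (hexcess A B) (hexcess B A).
Proof.
rewrite /hdist /hexcess; congr Num.max; congr sup; apply: eq_imagel => b _.
by congr inf; apply: eq_imagel => a _; rewrite metric_sym.
Qed.

Lemma hdistC A B : hdist A B = hdist B A.
Proof. by rewrite !hdistE maxC. Qed.

Lemma hexcess_le A B r : A !=set0 ->
  (forall a, A a -> exists2 b, B b & d a b <= r) -> hexcess A B <= r.
Proof.
move=> [a0 Aa0] near_B; apply: ge_sup; first by exists (inf [set d a0 b | b in B]), a0.
move=> _ [a Aa <-]; have [b Bb dab] := near_B a Aa.
apply: le_trans dab; apply: ge_inf; last by exists b.
by exists 0 => _ [z _ <-]; exact: mdist_ge0.
Qed.

Lemma hdist_le A B r : A !=set0 -> B !=set0 ->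
  (forall a, A a -> exists2 b, B b & d a b <= r) ->
  (forall b, B b -> exists2 a, A a & d a b <= r) ->
  hdist A B <= r.
Proof.
move=> A0 B0 near_B near_A; rewrite hdistE ge_max !hexcess_le //.
by move=> b /near_A [a Aa dab]; exists a; rewrite // metric_sym.
Qed.

Lemma hexcess_lt A B e a : B !=set0 ->
  (exists M, forall a b, A a -> B b -> d a b <= M) ->
  hexcess A B < e -> A a -> exists2 b, B b & d a b < e.
Proof.
move=> [b0 Bb0] [M bdM] exe Aa.
have inf_lb a' : has_lbound [set d a' b | b in B].
  by exists 0 => _ [z _ <-]; exact: mdist_ge0.
have : inf [set d a b | b in B] < e.
  apply: le_lt_trans exe; apply: ub_le_sup; last by exists a.
  exists M => _ [a' Aa' <-]; apply: le_trans (bdM a' b0 Aa' Bb0).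
  by apply: ge_inf => //; exists b0.
by case/inf_lt => [|_ [b Bb <-] dab]; [exists (d a b0), b0 | exists b].
Qed.

Lemma hdist_lt_l A B e a : B !=set0 ->
  (exists M, forall a b, A a -> B b -> d a b <= M) ->
  hdist A B < e -> A a -> exists2 b, B b & d a b < e.
Proof.
move=> B0 bdAB; rewrite hdistE gt_max => /andP[exe _].
exact: hexcess_lt exe.
Qed.

Lemma hdist_lt_r A B e b : A !=set0 ->
  (exists M, forall a b, A a -> B b -> d a b <= M) ->
  hdist A B < e -> B b -> exists2 a, A a & d a b < e.
Proof.
move=> A0 [M bdAB]; rewrite hdistC => he Bb.
have bdBA : exists M, forall b a, B b -> A a -> d b a <= M.
  by exists M => b' a' Bb' Aa'; rewrite metric_sym; exact: bdAB.
by have [a Aa dba] := hdist_lt_l A0 bdBA he Bb; exists a; rewrite // metric_sym.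
Qed.

Lemma mdist_le_hdist_pair (P Q : set X) (p q c : X) :
  P p -> Q q -> P `<=` [set p; c] -> Q `<=` [set c; q] ->
  d p q <= 2 * hdist P Q.
Proof.
move=> Pp Qq sP sQ.
have := mdist_ge0 p c; have := mdist_ge0 p q; have := mdist_ge0 c q.
move=> cq0 pq0 pc0.
have bdPQ : exists M, forall a b, P a -> Q b -> d a b <= M.
  exists (d p c + d p q + d c q) => a b /sP[]-> /sQ[]->; rewrite ?mdistxx; lra.
apply/ler_addgt0Pr => t t0.
have he : hdist P Q < hdist P Q + t / 2 by rewrite ltrDl divr_gt0.
have [b Qb dpb] := hdist_lt_l (ex_intro _ q Qq) bdPQ he Pp.
have [a Pa daq] := hdist_lt_r (ex_intro _ p Pp) bdPQ he Qq.
case: (sQ b Qb) dpb => -> dpb; last lra.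
case: (sP a Pa) daq => -> daq; first lra.
have := metric_triangle p c q; lra.
Qed.

End Hausdorff.

Section ConstantFirstMap.
Context {R : realType} {X : metricType R}.
Local Notation d := (@mdist R X).
Variables (f1 f2 : X -> X) (c : X).
Hypotheses (hc1 : forall x : X, f1 x = c) (hc2 : f2 c = c).

Lemma Fpow_iter n y : Fpow f1 f2 n y (iter n f2 y).
Proof.
exists (nseq n false); first by rewrite /= size_nseq.
by elim: n => //= n ->.
Qed.

Lemma Fpow_sub n y : Fpow f1 f2 n y `<=` [set iter n f2 y; c].
Proof.
move=> _ [w /= <- <-]; elim: w => [|[] w IH] /=; first by left.
  by right; rewrite hc1.
by case: IH => ->; [left | right].
Qed.

Definition lift_orbit (x : nat -> X) (n : nat) : set X :=
  if n is 0 then [set x 0%N] else [set c; x n].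

Variable x : nat -> X.

Lemma lift_orbit_point n : lift_orbit x n (x n).
Proof. by case: n => [|n] //=; right. Qed.

Lemma lift_orbit_sub n : lift_orbit x n `<=` [set c; x n].
Proof. by case: n => [|n] //= _ ->; right. Qed.

Lemma admissible_lift_orbit : admissible_seq (lift_orbit x).
Proof.
split; last by exists (x 0%N).
move=> n; split; last by exists (x n); exact: lift_orbit_point.
case: n => [|n] /=; first exact: compact_set1.
by apply: compactU; exact: compact_set1.
Qed.

Lemma hdist_Fset_lift_orbit n :
  hdist (Fset f1 f2 (lift_orbit x n)) (lift_orbit x n.+1) <= d (f2 (x n)) (x n.+1).
Proof.
have Fc : Fset f1 f2 (lift_orbit x n) c.
  by exists (x n); [exact: lift_orbit_point | left; rewrite hc1].
apply: hdist_le.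
- by exists c.
- by exists (x n.+1); exact: lift_orbit_point.
- move=> z [a /lift_orbit_sub An [->|->]].
    by exists c; [left | rewrite hc1 mdistxx mdist_ge0].
  case: An => ->; last by exists (x n.+1) => //; right.
  by exists c; [left | rewrite hc2 mdistxx mdist_ge0].
- move=> b [->|->]; first by exists c => //; rewrite mdistxx mdist_ge0.
  by exists (f2 (x n)) => //; exists (x n); [exact: lift_orbit_point | right].
Qed.

Lemma mdist_iter_le_hdist y n :
  d (iter n f2 y) (x n) <= 2 * hdist (Fpow f1 f2 n y) (lift_orbit x n).
Proof.
exact: mdist_le_hdist_pair (Fpow_iter n y) (lift_orbit_point n)
  (@Fpow_sub n y) (@lift_orbit_sub n).
Qed.

End ConstantFirstMap.

Section Averages.
Context {R : realType}.

Lemma ler_mean n (u v : nat -> R) : (forall i, u i <= v i) ->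
  n%:R^-1 * \sum_(i < n) u i <= n%:R^-1 * \sum_(i < n) v i.
Proof.
by move=> uv; apply: ler_wpM2l; [rewrite invr_ge0 ler0n | apply: ler_sum].
Qed.

Lemma limn_esup_le_scale (u v : R^nat) (k e : R) : 0 <= k ->
  (forall n, u n <= k * v n) ->
  (limn_esup (fun n => (v n)%:E) < e%:E)%E ->
  (limn_esup (fun n => (u n)%:E) <= (k * e)%:E)%E.
Proof.
move=> k0 uv; rewrite /limn_esup /limf_esup.
case/ereal_inf_lt => _ [V nearV <-] supVe.
apply: le_trans (ereal_inf_lbound _) _; first by exists V.
apply: ge_ereal_sup => _ [n Vn <-]; rewrite lee_fin.
apply: le_trans (uv n) _; apply: ler_wpM2l => //.
rewrite -lee_fin; apply/ltW; apply: le_lt_trans supVe.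
by apply: ereal_sup_ubound; exists n.
Qed.

End Averages.

Theorem theorem3p2 (R : realType) (X : metricType R)
    (hX : compact [set: X]) (f1 f2 : X -> X)
    (hf1 : continuous f1) (hf2 : continuous f2) (c : X)
    (hc1 : forall x : X, f1 x = c) (hc2 : f2 c = c) :
  (F_shadowing f1 f2 -> shadowing f2) /\
  (F_avg_shadowing f1 f2 -> avg_shadowing f2).
Proof.
have lift_step := hdist_Fset_lift_orbit hc1 hc2.
have lift_close := mdist_iter_le_hdist hc1 hc2.
split=> [Fshadow | Favg] eps eps0.
- have [del del0 shadow] := Fshadow (eps / 2) ltac:(lra).
  exists del => // x pseudo.
  have [y close] := shadow _ (admissible_lift_orbit c x)
    (fun n => le_trans (lift_step x n) (pseudo n)).
  by exists y => n; apply: le_lt_trans (lift_close x y n) _; have := close n; lra.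
- have [del del0 shadow] := Favg (eps / 3) ltac:(lra).
  exists del => // x [N [N0 pseudo]].
  have Fpseudo : F_avg_pseudo_orbit f1 f2 del (lift_orbit c x).
    split; first exact: admissible_lift_orbit.
    exists N; split=> // n k Nn k0; apply: le_lt_trans (pseudo n k Nn k0).
    exact: ler_mean (fun i => lift_step x (i + k)%N).
  have [y close] := shadow _ Fpseudo; exists y.
  have avg_le n : n%:R^-1 * \sum_(i < n) mdist (iter i f2 y) (x i) <=
      2 * (n%:R^-1 * \sum_(i < n) hdist (Fpow f1 f2 i y) (lift_orbit c x i)).
    apply: le_trans (ler_mean n (fun i => lift_close x y i)) _.
    by rewrite -mulr_sumr mulrCA.
  apply: le_lt_trans (limn_esup_le_scale (ler0n _ 2) avg_le close) _.
  by rewrite lte_fin; lra.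
Qed.
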